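(* Let $\mathfrak g$ be a Lie algebra with scalar product $\langle\cdot,\cdot\rangle$ such that $\operatorname{ad}(X)^\top$ exists for every $X\in\mathfrak g$. Let $A:\mathfrak g\to\mathfrak g^*$, $A(X)=\langle X,\cdot\rangle$, be the inertia operator, $\mathfrak g^*_{\rm reg}=A(\mathfrak g)$ with the scalar product $\langle A(X),A(Y)\rangle:=\langle X,Y\rangle$, and let $\mathfrak g^*_{\rm reg}\rtimes\mathfrak g$ be the semidirect product for the coadjoint action $b=\operatorname{ad}^*$, where $(\operatorname{ad}^*(X)m)(Y)=-m([X,Y])$ (this action preserves $\mathfrak g^*_{\rm reg}$, since $\operatorname{ad}^*(X)A(Y)=-A(\operatorname{ad}(X)^\top Y)$), endowed with the scalar product $\langle m_1,m_2\rangle+\langle X_1,X_2\rangle$. Then for curves $u,v$ in $\mathfrak g$, the curve $(A(v),u)$ satisfies the Euler equation in $\mathfrak g^*_{\rm reg}\rtimes\mathfrak g$ (the geodesic equation for the right invariant metric on the magnetic extension $\mathfrak g^*_{\rm reg}\rtimes G$) if and only if $$\frac{d}{dt}u=-\operatorname{ad}(u)^\top u+\operatorname{ad}(v)^\top v,\qquad \frac{d}{dt}v=\operatorname{ad}(u)v.$$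
   Context: The semidirect product bracket is $[(m_1,X_1),(m_2,X_2)]=(\operatorname{ad}^*(X_1)m_2-\operatorname{ad}^*(X_2)m_1,[X_1,X_2])$. The Euler equation in a Lie algebra $\mathfrak k$ with scalar product is $\dot w=-\operatorname{ad}(w)^\top w$, $\operatorname{ad}(w)^\top$ being the adjoint of $[w,\cdot]$. *)

From Stdlib Require Import Reals ClassicalEpsilon.
Open Scope R_scope.
Set Implicit Arguments.

Record LieSP : Type := {
  car :> Type;
  add : car -> car -> car;
  opp : car -> car;
  zero : car;
  scal : R -> car -> car;
  br : car -> car -> car;
  ip : car -> car -> R;
  addA : forall x y z, add x (add y z) = add (add x y) z;
  addC : forall x y, add x y = add y x;
  add0 : forall x, add zero x = x;
  addN : forall x, add (opp x) x = zero;
  scalDr : forall a x y, scal a (add x y) = add (scal a x) (scal a y);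
  scalDl : forall a b x, scal (a + b) x = add (scal a x) (scal b x);
  scalA : forall a b x, scal a (scal b x) = scal (a * b) x;
  scal1 : forall x, scal 1 x = x;
  brDl : forall x y z, br (add x y) z = add (br x z) (br y z);
  brZl : forall a x y, br (scal a x) y = scal a (br x y);
  brN : forall x y, br x y = opp (br y x);
  jacobi : forall x y z,
    add (br x (br y z)) (add (br y (br z x)) (br z (br x y))) = zero;
  ipDl : forall x y z, ip (add x y) z = ip x z + ip y z;
  ipZl : forall a x y, ip (scal a x) y = a * ip x y;
  ipC : forall x y, ip x y = ip y x;
  ip_pos : forall x, x <> zero -> 0 < ip x x
}.

Arguments add {g} : rename.
Arguments opp {g} : rename.
Arguments zero {g} : rename.
Arguments scal {g} : rename.
Arguments br {g} : rename.
Arguments ip {g} : rename.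

Section Defs.
Variable g : LieSP.

Definition sub (x y : g) : g := add x (opp y).
Definition norm (x : g) : R := sqrt (ip x x).

Definition has_deriv (c : R -> g) (t : R) (d : g) : Prop :=
  forall eps, 0 < eps -> exists delta, 0 < delta /\
    forall h, h <> 0 -> Rabs h < delta ->
      norm (sub (scal (/ h) (sub (c (t + h)) (c t))) d) < eps.

Definition dual := g -> R.

Definition inertia (X : g) : dual := fun Y => ip X Y.

Definition in_reg (m : dual) : Prop := exists X : g, m = inertia X.

(* a chosen preimage under A (A is injective, so it is unique on g^*_reg) *)
Definition preA (m : dual) : g :=
  epsilon (inhabits (zero : g)) (fun X => m = inertia X).

Definition ip_reg (m1 m2 : dual) : R := ip (preA m1) (preA m2).

Definition adstar (X : g) (m : dual) : dual := fun Y => - m (br X Y).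

Definition kel := (dual * g)%type.
Definition in_k (p : kel) : Prop := in_reg (fst p).

Definition add_k (p q : kel) : kel :=
  (fun Y => fst p Y + fst q Y, add (snd p) (snd q)).
Definition opp_k (p : kel) : kel := (fun Y => - fst p Y, opp (snd p)).
Definition scal_k (a : R) (p : kel) : kel :=
  (fun Y => a * fst p Y, scal a (snd p)).
Definition sub_k (p q : kel) : kel := add_k p (opp_k q).

Definition br_k (p q : kel) : kel :=
  (fun Y => adstar (snd p) (fst q) Y - adstar (snd q) (fst p) Y,
   br (snd p) (snd q)).

Definition ip_k (p q : kel) : R := ip_reg (fst p) (fst q) + ip (snd p) (snd q).
Definition norm_k (p : kel) : R := sqrt (ip_k p p).

Definition has_deriv_k (c : R -> kel) (t : R) (d : kel) : Prop :=
  forall eps, 0 < eps -> exists delta, 0 < delta /\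
    forall h, h <> 0 -> Rabs h < delta ->
      norm_k (sub_k (scal_k (/ h) (sub_k (c (t + h)) (c t))) d) < eps.

Definition is_adT_k (w : kel) (S : kel -> kel) : Prop :=
  (forall y, in_k y -> in_k (S y)) /\
  (forall x y, in_k x -> in_k y -> ip_k (br_k w x) y = ip_k x (S y)).

Definition Euler_k (w : R -> kel) : Prop :=
  forall t, exists d : kel, in_k d /\ has_deriv_k w t d /\
    exists S, is_adT_k (w t) S /\ d = opp_k (S (w t)).

End Defs.
Arguments has_deriv {g}.
Arguments inertia {g}.
Arguments Euler_k {g}.
Arguments has_deriv_k {g}.
Arguments in_reg {g}.
Arguments in_k {g}.
Arguments preA {g}.
Arguments ip_reg {g}.
Arguments adstar {g}.
Arguments br_k {g}.
Arguments ip_k {g}.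
Arguments is_adT_k {g}.
Arguments sub {g}.
Arguments norm {g}.
Arguments add_k {g}.
Arguments opp_k {g}.
Arguments scal_k {g}.
Arguments sub_k {g}.
Arguments norm_k {g}.

From Stdlib Require Import Reals Lra Classical ClassicalEpsilon FunctionalExtensionality.
Open Scope R_scope.

(* Every element of k = g^*_reg ⋊ g has the form (A X, Y), and in these
   coordinates the structure of k is read off from that of g: the scalar
   product is <X, X'> + <Y, Y'>, the bracket with (A v, u) is
   (A(-ad(u)^T Z + ad(W)^T v), [u, W]), and a curve (A v, u) is
   differentiable with derivative (A dv, du) iff v and u are, with
   derivatives dv and du (the norm of k is squeezed between the norms of
   the two components and their sum).

   It then
   writes down an explicit adjoint ad_k(w)^T of the bracket of k, and shows
   by nondegeneracy of the scalar product of k that every adjoint agrees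
   with it on k.  Hence the right-hand side - ad_k(w)^T w of the Euler
   equation at w = (A v, u) is forced to be (A [u, v], -ad(u)^T u + ad(v)^T v),
   and the theorem reduces to the componentwise description of derivatives. *)

Arguments ipC {l}.
Arguments ipDl {l}.
Arguments ipZl {l}.
Arguments add0 {l}.
Arguments addN {l}.
Arguments addC {l}.
Arguments addA {l}.
Arguments brN {l}.

Section ScalarProduct.
Context {g : LieSP}.
Implicit Types x y z a b : g.

Lemma ip0l y : ip (@zero g) y = 0.
Proof. pose proof (ipDl zero zero y) as H. rewrite add0 in H. lra. Qed.

Lemma ipNl x y : ip (opp x) y = - ip x y.
Proof. pose proof (ipDl (opp x) x y) as H. rewrite addN, ip0l in H. lra. Qed.

Lemma ipNr x y : ip x (opp y) = - ip x y.
Proof. rewrite ipC, ipNl, ipC; reflexivity. Qed.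

Lemma ipDr x y z : ip x (add y z) = ip x y + ip x z.
Proof. rewrite ipC, ipDl, (ipC y), (ipC z); reflexivity. Qed.

Lemma ip_nonneg x : 0 <= ip x x.
Proof.
  destruct (classic (x = zero)) as [-> | Hx].
  - rewrite ip0l; lra.
  - apply Rlt_le, ip_pos, Hx.
Qed.

Lemma ip_eq0 x : ip x x = 0 -> x = zero.
Proof.
  intro H. apply NNPP; intro Hx. pose proof (ip_pos g Hx). lra.
Qed.

Lemma ip_separates a b : (forall Z, ip Z a = ip Z b) -> a = b.
Proof.
  intro H.
  assert (Hab : ip (sub a b) (sub a b) = 0).
  { unfold sub at 2. rewrite ipDr, ipNr, H. lra. }
  apply ip_eq0 in Hab. unfold sub in Hab.
  rewrite <- (add0 a), <- (addN b), (addC (opp b)), <- addA, (addC (opp b)), Hab,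
    addC, add0.
  reflexivity.
Qed.

Lemma inertia_inj a b : inertia a = inertia b -> a = b.
Proof.
  intro H; apply ip_separates; intro Z.
  rewrite (ipC Z a), (ipC Z b). exact (equal_f H Z).
Qed.

Lemma preA_inertia a : preA (inertia a) = a.
Proof.
  unfold preA.
  pose proof (epsilon_spec (inhabits (@zero g)) (fun X => inertia a = inertia X)
     (ex_intro _ a eq_refl)) as H.
  symmetry; apply inertia_inj; exact H.
Qed.

Lemma inertia_opp a : inertia (opp a) = (fun Y => - inertia a Y).
Proof. apply functional_extensionality; intro Y. apply ipNl. Qed.

End ScalarProduct.

Section Coordinates.
Context {g : LieSP}.
Implicit Types a b c d e f k : g.

Lemma ip_k_inertia a b c d : ip_k (inertia a, b) (inertia c, d) = ip a c + ip b d.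
Proof. unfold ip_k, ip_reg; simpl. rewrite !preA_inertia; reflexivity. Qed.

Lemma sub_k_inertia r a b c e f k :
  sub_k (scal_k r (sub_k (inertia a, b) (inertia c, e))) (inertia f, k) =
  (inertia (sub (scal r (sub a c)) f), sub (scal r (sub b e)) k).
Proof.
  unfold sub_k, scal_k, add_k, opp_k; simpl. f_equal.
  apply functional_extensionality; intro Y. unfold inertia, sub.
  rewrite ipDl, ipZl, ipDl, !ipNl. reflexivity.
Qed.

Lemma sqrt_add_le (x y : R) : 0 <= x -> 0 <= y -> sqrt (x + y) <= sqrt x + sqrt y.
Proof.
  intros Hx Hy.
  rewrite <- (sqrt_square (sqrt x + sqrt y))
    by (pose proof (sqrt_pos x); pose proof (sqrt_pos y); lra).
  apply sqrt_le_1_alt.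
  replace ((sqrt x + sqrt y) * (sqrt x + sqrt y)) with
    (sqrt x * sqrt x + sqrt y * sqrt y + 2 * (sqrt x * sqrt y)) by ring.
  rewrite !sqrt_sqrt by assumption.
  pose proof (Rmult_le_pos _ _ (sqrt_pos x) (sqrt_pos y)); lra.
Qed.

Lemma norm_le_norm_k_l a b : norm a <= norm_k (inertia a, b).
Proof.
  unfold norm_k, norm; rewrite ip_k_inertia. apply sqrt_le_1_alt.
  pose proof (ip_nonneg b); lra.
Qed.

Lemma norm_le_norm_k_r a b : norm b <= norm_k (inertia a, b).
Proof.
  unfold norm_k, norm; rewrite ip_k_inertia. apply sqrt_le_1_alt.
  pose proof (ip_nonneg a); lra.
Qed.

Lemma norm_k_le a b : norm_k (inertia a, b) <= norm a + norm b.
Proof.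
  unfold norm_k, norm; rewrite ip_k_inertia. apply sqrt_add_le; apply ip_nonneg.
Qed.

Lemma has_deriv_k_inertia (u v : R -> g) t dv du :
  has_deriv_k (fun t => (inertia (v t), u t)) t (inertia dv, du) <->
  has_deriv v t dv /\ has_deriv u t du.
Proof.
  unfold has_deriv_k, has_deriv. split.
  - intro H; split; intros eps Heps; destruct (H eps Heps) as [delta [Hdelta Hh]];
      exists delta; split; [exact Hdelta | | exact Hdelta |];
      intros h Hh0 Hhd; specialize (Hh h Hh0 Hhd); cbv beta in Hh;
      rewrite sub_k_inertia in Hh; eapply Rle_lt_trans; try exact Hh.
    + apply norm_le_norm_k_l.
    + apply norm_le_norm_k_r.
  - intros [Hv Hu] eps Heps.
    destruct (Hv (eps / 2)) as [d1 [Hd1 H1]]; [lra |].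
    destruct (Hu (eps / 2)) as [d2 [Hd2 H2]]; [lra |].
    exists (Rmin d1 d2); split; [apply Rmin_pos; assumption |].
    intros h Hh0 Hhd. cbv beta. rewrite sub_k_inertia.
    specialize (H1 h Hh0 (Rlt_le_trans _ _ _ Hhd (Rmin_l _ _))).
    specialize (H2 h Hh0 (Rlt_le_trans _ _ _ Hhd (Rmin_r _ _))).
    eapply Rle_lt_trans; [apply norm_k_le | lra].
Qed.

Lemma ip_k_separates (p q : kel g) :
  in_k p -> in_k q -> (forall x, in_k x -> ip_k x p = ip_k x q) -> p = q.
Proof.
  destruct p as [m b], q as [n d]. intros [a Ha] [c Hc] H.
  simpl in Ha, Hc; subst m n.
  assert (Hsplit : forall Z W, ip Z a + ip W b = ip Z c + ip W d).
  { intros Z W. rewrite <- !ip_k_inertia. apply H. exists Z; reflexivity. }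
  assert (Hac : a = c).
  { apply ip_separates; intro Z. pose proof (Hsplit Z zero). rewrite !ip0l in *. lra. }
  assert (Hbd : b = d).
  { apply ip_separates; intro W. pose proof (Hsplit zero W). rewrite !ip0l in *. lra. }
  subst; reflexivity.
Qed.

Lemma adT_k_unique {w y : kel g} {S T : kel g -> kel g} :
  is_adT_k w S -> is_adT_k w T -> in_k y -> S y = T y.
Proof.
  intros [HS HSadj] [HT HTadj] Hy.
  apply ip_k_separates; [apply HS, Hy | apply HT, Hy |].
  intros x Hx. rewrite <- HSadj, <- HTadj by assumption. reflexivity.
Qed.

End Coordinates.

Section Adjoint.
Context {g : LieSP}.
Variable adT : g -> g -> g.
Hypothesis HadT : forall X Y Z : g, ip (br X Y) Z = ip Y (adT X Z).

Lemma br_k_inertia u v Z W :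
  br_k (inertia v, u) (inertia Z, W) =
  (inertia (add (opp (adT u Z)) (adT W v)), br u W).
Proof.
  unfold br_k, adstar, inertia; simpl. f_equal.
  apply functional_extensionality; intro Y.
  rewrite ipDl, ipNl, (ipC Z), (ipC v), !HadT, (ipC Y), (ipC Y). lra.
Qed.

(* The adjoint of ad_k(w) for w = (A v, u):
   ad_k(w)^T (A Y', Y) = (A(-[u, Y']), ad(u)^T Y - ad(Y')^T v). *)
Definition adT_k (w y : kel g) : kel g :=
  (inertia (opp (br (snd w) (preA (fst y)))),
   add (adT (snd w) (snd y)) (opp (adT (preA (fst y)) (preA (fst w))))).

Lemma adT_k_spec {w : kel g} : in_k w -> is_adT_k w (adT_k w).
Proof.
  destruct w as [m u]; intros [v Hv]; simpl in Hv; subst m. split.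
  - intros y _. eexists; reflexivity.
  - intros [m1 X] [m2 Y] [Z HZ] [Y' HY']; simpl in HZ, HY'; subst m1 m2.
    unfold adT_k; simpl.
    rewrite br_k_inertia, !ip_k_inertia, !preA_inertia.
    rewrite ipDl, ipNl, (ipC (adT u Z)), <- (HadT u Y' Z),
      (ipC (adT X v)), <- (HadT X Y'), (brN X Y'), ipNl, (HadT Y' X),
      (HadT u X Y), ipNr, ipDr, ipNr, (ipC Z).
    lra.
Qed.

Lemma euler_rhs_inertia {u v : g} {S : kel g -> kel g} :
  is_adT_k (inertia v, u) S ->
  opp_k (S (inertia v, u)) = (inertia (br u v), add (opp (adT u u)) (adT v v)).
Proof.
  intro HS.
  assert (Hw : in_k (inertia v, u)) by (exists v; reflexivity).
  rewrite (adT_k_unique HS (adT_k_spec Hw) Hw).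
  unfold adT_k, opp_k; simpl. rewrite preA_inertia, inertia_opp. f_equal.
  - apply functional_extensionality; intro Y. lra.
  - apply ip_separates; intro W. rewrite ipNr, !ipDr, !ipNr. lra.
Qed.

End Adjoint.

Theorem proposition8p1 (g : LieSP) (adT : g -> g -> g)
  (HadT : forall X Y Z : g, ip (br X Y) Z = ip Y (adT X Z))
  (u v : R -> g) :
  Euler_k (fun t => (inertia (v t), u t)) <->
  (forall t : R,
     has_deriv u t (add (opp (adT (u t) (u t))) (adT (v t) (v t))) /\
     has_deriv v t (br (u t) (v t))).
Proof.
  split.
  - intros HE t. destruct (HE t) as [d [_ [Hd [S [HS Hdef]]]]].
    rewrite Hdef, (euler_rhs_inertia adT HadT HS) in Hd.
    apply has_deriv_k_inertia in Hd. tauto.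
  - intros H t.
    assert (Hw : in_k (inertia (v t), u t)) by (exists (v t); reflexivity).
    pose proof (adT_k_spec adT HadT Hw) as Hadj.
    exists (opp_k (adT_k adT (inertia (v t), u t) (inertia (v t), u t))).
    rewrite (euler_rhs_inertia adT HadT Hadj). split; [| split].
    + exists (br (u t) (v t)); reflexivity.
    + apply has_deriv_k_inertia. destruct (H t); tauto.
    + exists (adT_k adT (inertia (v t), u t)); split; [exact Hadj |].
      symmetry; apply (euler_rhs_inertia adT HadT Hadj).
Qed.
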